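(* For every $n\geq 1$ and every $\varepsilon>0$ there is $M$ such that for all $m\geq M$, Duplicator has a winning strategy in the game $\Gamma_{\mathrm{HS}}(\mathbb M_m,\mathbb M_{m+1},n,\varepsilon)$.
   Context: $\mathbb M_m$ denotes the algebra of complex $m\times m$ matrices with matrix multiplication, addition, scalar multiplication and adjoint $a^*$ (conjugate transpose). For a vector $\xi=(x_1,\dots,x_m)\in\mathbb C^m$, $\|\xi\|=\sqrt{\sum_i|x_i|^2}$; the operator norm of $a\in\mathbb M_m$ is $\|a\|_{\mathrm{OP}}=\sup\{\|a\xi\|:\|\xi\|=1\}$, and the normalized Hilbert--Schmidt norm of $a=(a_{ij})$ is $\|a\|_{\mathrm{HS}}=\sqrt{\frac1m\sum_{i,j=1}^m|a_{ij}|^2}$. For $l,m,n\geq 1$ and $\varepsilon>0$, the game $\Gamma_{\mathrm{HS}}(\mathbb M_l,\mathbb M_m,n,\varepsilon)$ between Challenger and Duplicator lasts $n$ innings: in each inning Challenger chooses a matrix $x$ with $\|x\|_{\mathrm{OP}}\leq 1$ in one of $\mathbb M_l$, $\mathbb M_m$, and Duplicator responds with a matrix $x$ with $\|x\|_{\mathrm{OP}}\leq 1$ in the other algebra; thus in inning $j$ matrices $a_j\in\mathbb M_l$ and $b_j\in\mathbb M_m$ are determined (repetitions are allowed). After $n$ innings Duplicator wins iff for all $i,j,k\leq n$ and all complex numbers $y,z$ with $\max(|y|,|z|)\leq 1$, each of the quantities $\big|\|a_i\|_{\mathrm{HS}}-\|b_i\|_{\mathrm{HS}}\big|$, $\big|\|a_ia_j-a_k\|_{\mathrm{HS}}-\|b_ib_j-b_k\|_{\mathrm{HS}}\big|$,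 $\big|\|ya_i+za_j-a_k\|_{\mathrm{HS}}-\|yb_i+zb_j-b_k\|_{\mathrm{HS}}\big|$ and $\big|\|a_i^*-a_j\|_{\mathrm{HS}}-\|b_i^*-b_j\|_{\mathrm{HS}}\big|$ is at most $\varepsilon$; otherwise Challenger wins. A winning strategy for a player is a rule specifying that player's moves as a function of previous moves such that the player wins regardless of the opponent's play. *)

From mathcomp Require Import all_boot all_order all_algebra reals.
From mathcomp.real_closed Require Import complex.
Set Implicit Arguments. Unset Strict Implicit. Unset Printing Implicit Defensive.
Import Order.TTheory GRing.Theory Num.Theory.
Local Open Scope ring_scope.

Section HSGame.
Variable R : realType.
Local Notation C := (R[i]).

Definition cabs (z : C) : R := Normc.normc z.

Definition vnorm (m : nat) (xi : 'cV[C]_m) : R :=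
  Num.sqrt (\sum_(i < m) cabs (xi i 0) ^+ 2).

(* ||a||_OP <= 1, i.e. sup{||a xi|| : ||xi|| = 1} <= 1 *)
Definition contraction (m : nat) (a : 'M[C]_m) : Prop :=
  forall xi : 'cV[C]_m, vnorm xi = 1 -> vnorm (a *m xi) <= 1.

Definition hsnorm (m : nat) (a : 'M[C]_m) : R :=
  Num.sqrt ((m%:R)^-1 * \sum_(i < m) \sum_(j < m) cabs (a i j) ^+ 2).

Definition adj (m : nat) (a : 'M[C]_m) : 'M[C]_m :=
  \matrix_(i, j) conjc (a j i).

Definition dup_wins_pos (l m n : nat) (eps : R)
    (a : nat -> 'M[C]_l) (b : nat -> 'M[C]_m) : Prop :=
  forall i j k : nat, (i < n)%N -> (j < n)%N -> (k < n)%N ->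
  forall y z : C, Num.max (cabs y) (cabs z) <= 1 ->
    [/\ `| hsnorm (a i) - hsnorm (b i) | <= eps,
        `| hsnorm (a i * a j - a k) - hsnorm (b i * b j - b k) | <= eps,
        `| hsnorm (y *: a i + z *: a j - a k)
           - hsnorm (y *: b i + z *: b j - b k) | <= eps
      & `| hsnorm (adj (a i) - a j) - hsnorm (adj (b i) - b j) | <= eps].

(* A Duplicator strategy: given the history of previous innings (list of
   pairs (a_j, b_j)) and Challenger's current move (a matrix in M_l, tagged
   inl, or in M_m, tagged inr), the response in the other algebra. *)
Record dup_strategy (l m : nat) := DupStrategy {
  respL : seq ('M[C]_l * 'M[C]_m) -> 'M[C]_l -> 'M[C]_m;
  respR : seq ('M[C]_l * 'M[C]_m) -> 'M[C]_m -> 'M[C]_l }.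

Definition legal_strategy (l m : nat) (s : dup_strategy l m) : Prop :=
  (forall h x, contraction x -> contraction (respL s h x)) /\
  (forall h x, contraction x -> contraction (respR s h x)).

Definition chal_move_legal (l m : nat) (c : 'M[C]_l + 'M[C]_m) : Prop :=
  match c with inl x => contraction x | inr x => contraction x end.

Definition inning (l m : nat) (s : dup_strategy l m)
    (h : seq ('M[C]_l * 'M[C]_m)) (c : 'M[C]_l + 'M[C]_m) :
    seq ('M[C]_l * 'M[C]_m) :=
  match c with
  | inl x => rcons h (x, respL s h x)
  | inr x => rcons h (respR s h x, x)
  end.

Definition play (l m : nat) (s : dup_strategy l m)
    (cs : seq ('M[C]_l + 'M[C]_m)) : seq ('M[C]_l * 'M[C]_m) :=
  foldl (inning s) [::] cs.

(* Since Duplicator's strategy is deterministic, quantifying over all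
   sequences of legal Challenger moves covers all Challenger strategies. *)
Definition dup_has_winning_strategy (l m n : nat) (eps : R) : Prop :=
  exists s : dup_strategy l m, legal_strategy s /\
    forall cs : seq ('M[C]_l + 'M[C]_m),
      size cs = n -> (forall c, c \in cs -> chal_move_legal c) ->
      let h := play s cs in
      dup_wins_pos n eps (fun i => (nth (0, 0) h i).1)
                         (fun i => (nth (0, 0) h i).2).

End HSGame.

From mathcomp Require Import all_boot all_order all_algebra reals.
From mathcomp.real_closed Require Import complex.
From mathcomp Require Import ring lra.
Import Order.TTheory GRing.Theory Num.Theory.
Local Open Scope ring_scope.
Set Implicit Arguments. Unset Strict Implicit. Unset Printing Implicit Defensive.

(* Duplicator answers a move X in M_m by padding it with a zero last row and
   column, and a move Y in M_(m+1) by its top-left m x m corner; so at every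
   inning a_i is the corner of b_i and all b_i are contractions.  Each quantity
   of the winning condition is, on the M_(m+1) side, the HS norm of a sum W of
   at most three contractions and, on the M_m side, that of the corner of W,
   minus a rank-one term of Frobenius mass at most 1 when a product drops the
   last index.  Rows and columns of a contraction have squared length at most
   1, so the last row and column of W carry O(1) of its squared Frobenius norm
   against O(m) in total, and Young's inequality with a small parameter d
   absorbs the rank-one error: the squared normalised HS norms differ by
   O(d + 1/(d m)), which is below eps^2 for d ~ eps^2 and m large. *)

Section HSGameDuplicator.
Variable R : realType.
Local Notation C := R[i].

Definition normc2 (z : C) : R := let: Complex a b := z in a ^+ 2 + b ^+ 2.

Lemma normc2_ge0 z : 0 <= normc2 z.
Proof. by case: z => a b; rewrite addr_ge0 ?sqr_ge0. Qed.

Lemma cabs_sqr z : cabs z ^+ 2 = normc2 z.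
Proof. by case: z => a b; rewrite /cabs /= sqr_sqrtr // addr_ge0 ?sqr_ge0. Qed.

Lemma normc2_eq0 z : normc2 z = 0 -> z = 0.
Proof. by rewrite -cabs_sqr => /eqP; rewrite sqrf_eq0 => /eqP /Normc.eq0_normc. Qed.

Lemma normc2_le1 z : cabs z <= 1 -> normc2 z <= 1.
Proof.
move=> z1; rewrite -cabs_sqr -(expr1n _ 2) ler_sqr ?nnegrE //.
by case: z z1 => a b; rewrite /cabs sqrtr_ge0.
Qed.

Lemma normc2_real (r : R) : normc2 r%:C%C = r ^+ 2.
Proof. by rewrite /= expr0n addr0. Qed.

Lemma normc2M z w : normc2 (z * w) = normc2 z * normc2 w.
Proof. by case: z => a b; case: w => c d; rewrite /=; ring. Qed.

Lemma normc2N z : normc2 (- z) = normc2 z.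
Proof. by case: z => a b; rewrite /=; ring. Qed.

Lemma normc2_conj z : normc2 (conjc z) = normc2 z.
Proof. by case: z => a b; rewrite /=; ring. Qed.

Lemma normc2_mul_conj z : (normc2 z)%:C%C = z * conjc z.
Proof. by case: z => a b; rewrite /=; congr Complex; ring. Qed.

Lemma normc2_add3 z w u :
  normc2 (z + w + u) <= 3 * (normc2 z + normc2 w + normc2 u).
Proof.
case: z => a b; case: w => c d; case: u => e f; rewrite /=.
have := sqr_ge0 (a - c); have := sqr_ge0 (b - d); have := sqr_ge0 (a - e).
have := sqr_ge0 (b - f); have := sqr_ge0 (c - e); have := sqr_ge0 (d - f).
nra.
Qed.

Lemma Re_mul_conj_le z w : 2 * complex.Re (z * conjc w) <= normc2 z + normc2 w.
Proof.
case: z => a b; case: w => c d; rewrite /=.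
have := sqr_ge0 (a - c); have := sqr_ge0 (b - d); nra.
Qed.

(* Young's inequality [2|y||e| <= d|y|^2 + |e|^2/d] bounds the cross term. *)
Lemma normc2_subr_young (y e : C) (d : R) : 0 < d ->
  `|normc2 (y - e) - normc2 y| <= d * normc2 y + (1 + d^-1) * normc2 e.
Proof.
move=> d0; have dr : d * d^-1 = 1 by rewrite mulfV // gt_eqF.
have young u v :
    - (d * u ^+ 2 + d^-1 * v ^+ 2) <= 2 * u * v <= d * u ^+ 2 + d^-1 * v ^+ 2.
  have := mulr_ge0 (ltW d0) (sqr_ge0 (u + d^-1 * v)).
  have := mulr_ge0 (ltW d0) (sqr_ge0 (u - d^-1 * v)).
  have -> : d * (u - d^-1 * v) ^+ 2 =
      d * u ^+ 2 - 2 * u * v * (d * d^-1) + d^-1 * v ^+ 2 * (d * d^-1) by ring.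
  have -> : d * (u + d^-1 * v) ^+ 2 =
      d * u ^+ 2 + 2 * u * v * (d * d^-1) + d^-1 * v ^+ 2 * (d * d^-1) by ring.
  by rewrite dr !mulr1 => h1 h2; apply/andP; split; lra.
case: y => a b; case: e => c f; rewrite /=.
have /andP[ac1 ac2] := young a c; have /andP[bf1 bf2] := young b f.
have -> : (a - c) ^+ 2 + (b - f) ^+ 2 - (a ^+ 2 + b ^+ 2) =
    - (2 * a * c) - 2 * b * f + (c ^+ 2 + f ^+ 2) by ring.
have r0 : 0 <= d^-1 by rewrite invr_ge0 ltW.
have := mulr_ge0 r0 (addr_ge0 (sqr_ge0 c) (sqr_ge0 f)).
have := sqr_ge0 c; have := sqr_ge0 f.
by move=> h1 h2 h3; apply/ler_normlP; split; lra.
Qed.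

Definition vnorm2 k (v : 'cV[C]_k) : R := \sum_i normc2 (v i 0).

Lemma vnorm2_ge0 k (v : 'cV[C]_k) : 0 <= vnorm2 v.
Proof. by apply: sumr_ge0 => i _; apply: normc2_ge0. Qed.

Lemma vnormE k (v : 'cV[C]_k) : vnorm v = Num.sqrt (vnorm2 v).
Proof. by congr Num.sqrt; apply: eq_bigr => i _; rewrite cabs_sqr. Qed.

Lemma vnorm2_eq0 k (v : 'cV[C]_k) : vnorm2 v = 0 -> v = 0.
Proof.
move/eqP; rewrite psumr_eq0 => [/allP v0|i _]; last exact: normc2_ge0.
apply/matrixP => i j; rewrite ord1 mxE; apply: normc2_eq0.
by apply/eqP; have /implyP := v0 i (mem_index_enum _); apply.
Qed.

Lemma vnorm2Z k (c : C) (v : 'cV[C]_k) : vnorm2 (c *: v) = normc2 c * vnorm2 v.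
Proof. by rewrite /vnorm2 mulr_sumr; apply: eq_bigr => i _; rewrite mxE normc2M. Qed.

Lemma vnorm2_delta k (q : 'I_k) : vnorm2 (delta_mx q 0 : 'cV[C]_k) = 1.
Proof.
rewrite /vnorm2 (bigD1 q) //= big1 => [|i iq]; rewrite mxE.
  by rewrite !eqxx /= expr1n expr0n /= !addr0.
by rewrite (negbTE iq) /= expr0n /= addr0.
Qed.

Lemma contractionP k (a : 'M[C]_k) :
  contraction a <-> forall v, vnorm2 (a *m v) <= vnorm2 v.
Proof.
split=> [ha v|ha v]; last first.
  by rewrite !vnormE => v1; rewrite -v1 ler_sqrt ?vnorm2_ge0.
have [/vnorm2_eq0 ->|v0] := eqVneq (vnorm2 v) 0; first by rewrite mulmx0.
have vpos : 0 < vnorm2 v by rewrite lt_def v0 vnorm2_ge0.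
pose c := ((Num.sqrt (vnorm2 v))^-1)%:C%C.
have nc : normc2 c = (vnorm2 v)^-1 by rewrite normc2_real exprVn sqr_sqrtr // ltW.
have cv1 : vnorm2 (c *: v) = 1 by rewrite vnorm2Z nc mulVf.
have := ha (c *: v); rewrite !vnormE cv1 sqrtr1 => /(_ erefl).
rewrite -scalemxAr -sqrtr1 ler_sqrt // vnorm2Z nc.
by rewrite ler_pdivrMl // mulr1.
Qed.

Lemma contraction0 k : contraction (0 : 'M[C]_k).
Proof.
apply/contractionP => v; rewrite mul0mx /vnorm2 big1 ?vnorm2_ge0 // => i _.
by rewrite mxE /= expr0n /= addr0.
Qed.

Lemma contractionZ k (c : C) (a : 'M[C]_k) :
  normc2 c <= 1 -> contraction a -> contraction (c *: a).
Proof.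
move=> c1 /contractionP ha; apply/contractionP => v.
rewrite -scalemxAl vnorm2Z (le_trans _ (ha v)) // ler_piMl ?vnorm2_ge0 //.
Qed.

Lemma contractionN k (a : 'M[C]_k) : contraction a -> contraction (- a).
Proof. by rewrite -scaleN1r; apply: contractionZ; rewrite normc2N /= expr1n expr0n addr0. Qed.

Lemma contractionM k (a b : 'M[C]_k) : contraction a -> contraction b -> contraction (a *m b).
Proof.
move=> /contractionP ha /contractionP hb; apply/contractionP => v.
by rewrite -mulmxA (le_trans (ha _) (hb v)).
Qed.

(* With [w = a^* u]: [2|w|^2 = 2 Re <u, a w> <= |u|^2 + |a w|^2 <= |u|^2 + |w|^2]. *)
Lemma contraction_adj k (a : 'M[C]_k) : contraction a -> contraction (adj a).
Proof.
move=> /contractionP ha; apply/contractionP => u.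
set w := adj a *m u; set x := a *m w.
have wx : (vnorm2 w)%:C%C = \sum_q u q 0 * conjc (x q 0).
  rewrite raddf_sum (eq_bigr (fun p => w p 0 * conjc (w p 0))) => [|p _]; last first.
    exact: normc2_mul_conj.
  under eq_bigr => p _ do rewrite {1}/w mxE mulr_suml.
  rewrite exchange_big; apply: eq_bigr => q _ /=.
  rewrite /x mxE rmorph_sum mulr_sumr; apply: eq_bigr => p _.
  by rewrite !mxE rmorphM /=; ring.
have : 2 * vnorm2 w <= vnorm2 u + vnorm2 x.
  rewrite -[vnorm2 w]/(complex.Re (vnorm2 w)%:C%C) wx raddf_sum mulr_sumr -big_split.
  by apply: ler_sum => q _; apply: Re_mul_conj_le.
have := ha w; lra.
Qed.

Definition colnorm2 k (X : 'M[C]_k) (q : 'I_k) : R := \sum_p normc2 (X p q).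
Definition rownorm2 k (X : 'M[C]_k) (p : 'I_k) : R := \sum_q normc2 (X p q).

Lemma rownorm2_adj k (X : 'M[C]_k) p : rownorm2 X p = colnorm2 (adj X) p.
Proof. by apply: eq_bigr => q _; rewrite mxE normc2_conj. Qed.

Lemma colnorm2_le1 k (X : 'M[C]_k) q : contraction X -> colnorm2 X q <= 1.
Proof.
move=> /contractionP hX.
have -> : colnorm2 X q = vnorm2 (X *m delta_mx q 0).
  by rewrite -colE; apply: eq_bigr => p _; rewrite mxE.
by rewrite -(vnorm2_delta q) hX.
Qed.

Lemma rownorm2_le1 k (X : 'M[C]_k) p : contraction X -> rownorm2 X p <= 1.
Proof. by move=> hX; rewrite rownorm2_adj; apply/colnorm2_le1/contraction_adj. Qed.

Lemma sum_normc2_add3_le9 k (f g h : 'I_k -> C) :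
  \sum_i normc2 (f i) <= 1 -> \sum_i normc2 (g i) <= 1 -> \sum_i normc2 (h i) <= 1 ->
  \sum_i normc2 (f i + g i + h i) <= 9.
Proof.
move=> hf hg hh; apply: le_trans (ler_sum _ (fun i _ => normc2_add3 (f i) (g i) (h i))) _.
rewrite -mulr_sumr !big_split /=; lra.
Qed.

Lemma lines_add3_le9 k (A B D : 'M[C]_k) :
  contraction A -> contraction B -> contraction D ->
  (forall q, colnorm2 (A + B + D) q <= 9) /\ (forall p, rownorm2 (A + B + D) p <= 9).
Proof.
move=> hA hB hD; split=> [q|p].
  rewrite /colnorm2; under eq_bigr => p _ do rewrite !mxE.
  by apply: sum_normc2_add3_le9; apply: colnorm2_le1.
rewrite /rownorm2; under eq_bigr => q _ do rewrite !mxE.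
by apply: sum_normc2_add3_le9; apply: rownorm2_le1.
Qed.

Local Notation widen := (widen_ord (leqnSn _)).

Definition corner m (Y : 'M[C]_m.+1) : 'M[C]_m := \matrix_(p, q) Y (widen p) (widen q).

Definition pad m (X : 'M[C]_m) : 'M[C]_m.+1 :=
  \matrix_(i, j)
    if (unlift ord_max i, unlift ord_max j) is (Some p, Some q) then X p q else 0.

Definition restrict m (v : 'cV[C]_m.+1) : 'cV[C]_m := \col_p v (widen p) 0.

Definition extend m (v : 'cV[C]_m) : 'cV[C]_m.+1 :=
  \col_i oapp (fun p => v p 0) 0 (unlift ord_max i).

Lemma unlift_max_widen m (p : 'I_m) : unlift ord_max (widen p) = Some p.
Proof.
have -> : widen p = lift ord_max p by apply: val_inj; rewrite /= /bump leqNgt ltn_ord.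
by rewrite liftK.
Qed.

Lemma colnorm2_widen_le m (Y : 'M[C]_m.+1) q :
  \sum_p normc2 (Y (widen p) q) <= colnorm2 Y q.
Proof. by rewrite /colnorm2 big_ord_recr lerDl normc2_ge0. Qed.

Lemma rownorm2_widen_le m (Y : 'M[C]_m.+1) p :
  \sum_q normc2 (Y p (widen q)) <= rownorm2 Y p.
Proof. by rewrite /rownorm2 big_ord_recr lerDl normc2_ge0. Qed.

Lemma corner_pad m (X : 'M[C]_m) : corner (pad X) = X.
Proof. by apply/matrixP => p q; rewrite !mxE !unlift_max_widen. Qed.

Lemma vnorm2_restrict m (v : 'cV[C]_m.+1) :
  vnorm2 v = vnorm2 (restrict v) + normc2 (v ord_max 0).
Proof. by rewrite /vnorm2 big_ord_recr; congr (_ + _); apply: eq_bigr => p _; rewrite mxE. Qed.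

Lemma vnorm2_restrict_le m (v : 'cV[C]_m.+1) : vnorm2 (restrict v) <= vnorm2 v.
Proof. by rewrite (vnorm2_restrict v) lerDl normc2_ge0. Qed.

Lemma vnorm2_extend m (v : 'cV[C]_m) : vnorm2 (extend v) = vnorm2 v.
Proof.
rewrite vnorm2_restrict !mxE unlift_none /= expr0n /= !addr0.
by apply: eq_bigr => p _; rewrite !mxE unlift_max_widen.
Qed.

Lemma corner_mulmx m (Y : 'M[C]_m.+1) v : corner Y *m v = restrict (Y *m extend v).
Proof.
apply/matrixP => p j; rewrite ord1 !mxE big_ord_recr /= !mxE unlift_none mulr0 addr0.
by apply: eq_bigr => q _; rewrite !mxE unlift_max_widen.
Qed.

Lemma pad_mulmx m (X : 'M[C]_m) v : pad X *m v = extend (X *m restrict v).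
Proof.
apply/matrixP => i j; rewrite ord1 !mxE big_ord_recr !mxE unlift_none /=.
case: unliftP => [p ->|->]; rewrite ?liftK ?unlift_none /= mul0r addr0.
  by rewrite mxE; apply: eq_bigr => q _; rewrite !mxE liftK unlift_max_widen.
by rewrite big1 // => q _; rewrite mxE unlift_none mul0r.
Qed.

Lemma contraction_corner m (Y : 'M[C]_m.+1) : contraction Y -> contraction (corner Y).
Proof.
move=> /contractionP hY; apply/contractionP => v.
by rewrite corner_mulmx -(vnorm2_extend v) (le_trans (vnorm2_restrict_le _)).
Qed.

Lemma contraction_pad m (X : 'M[C]_m) : contraction X -> contraction (pad X).
Proof.
move=> /contractionP hX; apply/contractionP => v.
by rewrite pad_mulmx vnorm2_extend (le_trans (hX _)) ?vnorm2_restrict_le.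
Qed.

Definition frob2 k (X : 'M[C]_k) : R := \sum_i \sum_j normc2 (X i j).

Lemma frob2_ge0 k (X : 'M[C]_k) : 0 <= frob2 X.
Proof. by apply: sumr_ge0 => i _; apply: sumr_ge0 => j _; apply: normc2_ge0. Qed.

Lemma frob2_0 k : frob2 (0 : 'M[C]_k) = 0.
Proof.
rewrite /frob2 big1 // => i _; rewrite big1 // => j _.
by rewrite mxE /= expr0n /= addr0.
Qed.

Lemma hsnormE k (X : 'M[C]_k) : hsnorm X = Num.sqrt (k%:R^-1 * frob2 X).
Proof.
by congr (Num.sqrt (_ * _)); apply: eq_bigr => i _; apply: eq_bigr => j _; rewrite cabs_sqr.
Qed.

Lemma frob2_le_cols k (X : 'M[C]_k) K :
  (forall q, colnorm2 X q <= K) -> frob2 X <= k%:R * K.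
Proof.
move=> hX; have -> : frob2 X = \sum_q colnorm2 X q by rewrite /frob2 exchange_big.
by apply: le_trans (ler_sum _ (fun q _ => hX q)) _; rewrite sumr_const card_ord mulr_natl.
Qed.

Lemma frob2_subr_young k (Z E : 'M[C]_k) (d : R) : 0 < d ->
  `|frob2 (Z - E) - frob2 Z| <= d * frob2 Z + (1 + d^-1) * frob2 E.
Proof.
move=> d0; rewrite /frob2 -sumrB; apply: le_trans (ler_norm_sum _ _ _) _.
rewrite !mulr_sumr -big_split; apply: ler_sum => i _.
rewrite -sumrB; apply: le_trans (ler_norm_sum _ _ _) _.
rewrite !mulr_sumr -big_split; apply: ler_sum => j _.
by rewrite !mxE; apply: normc2_subr_young.
Qed.

Lemma frob2_corner m (Y : 'M[C]_m.+1) :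
  frob2 (corner Y) <= frob2 Y <= frob2 (corner Y) + colnorm2 Y ord_max + rownorm2 Y ord_max.
Proof.
have -> : frob2 Y =
    frob2 (corner Y) + \sum_p normc2 (Y (widen p) ord_max) + rownorm2 Y ord_max.
  rewrite /frob2 big_ord_recr; congr (_ + _).
  under eq_bigr => p _ do rewrite big_ord_recr.
  rewrite big_split; congr (_ + _).
  by apply: eq_bigr => p _; apply: eq_bigr => q _; rewrite mxE.
have col0 : 0 <= \sum_p normc2 (Y (widen p) ord_max).
  by apply: sumr_ge0 => p _; apply: normc2_ge0.
have row0 : 0 <= rownorm2 Y ord_max by apply: sumr_ge0 => q _; apply: normc2_ge0.
have colle := colnorm2_widen_le Y ord_max.
by apply/andP; split; lra.
Qed.

Definition corner_cross m (Y1 Y2 : 'M[C]_m.+1) : 'M[C]_m :=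
  \matrix_(p, q) (Y1 (widen p) ord_max * Y2 ord_max (widen q)).

Lemma corner_mul m (Y1 Y2 : 'M[C]_m.+1) :
  corner (Y1 * Y2) = corner Y1 * corner Y2 + corner_cross Y1 Y2.
Proof.
rewrite -!mulmxE; apply/matrixP => p q; rewrite !mxE big_ord_recr /=.
by congr (_ + _); apply: eq_bigr => r _; rewrite !mxE.
Qed.

Lemma frob2_corner_cross m (Y1 Y2 : 'M[C]_m.+1) :
  contraction Y1 -> contraction Y2 -> frob2 (corner_cross Y1 Y2) <= 1.
Proof.
move=> h1 h2.
have -> : frob2 (corner_cross Y1 Y2) =
    (\sum_p normc2 (Y1 (widen p) ord_max)) * \sum_q normc2 (Y2 ord_max (widen q)).
  rewrite /frob2 mulr_suml; apply: eq_bigr => p _; rewrite mulr_sumr.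
  by apply: eq_bigr => q _; rewrite mxE normc2M.
rewrite -(mulr1 1); apply: ler_pM.
- by apply: sumr_ge0 => p _; apply: normc2_ge0.
- by apply: sumr_ge0 => q _; apply: normc2_ge0.
- exact: le_trans (colnorm2_widen_le _ _) (colnorm2_le1 _ h1).
- exact: le_trans (rownorm2_widen_le _ _) (rownorm2_le1 _ h2).
Qed.

Lemma cornerD m (A B : 'M[C]_m.+1) : corner (A + B) = corner A + corner B.
Proof. by apply/matrixP => p q; rewrite !mxE. Qed.

Lemma cornerN m (A : 'M[C]_m.+1) : corner (- A) = - corner A.
Proof. by apply/matrixP => p q; rewrite !mxE. Qed.

Lemma cornerZ m (c : C) (A : 'M[C]_m.+1) : corner (c *: A) = c *: corner A.
Proof. by apply/matrixP => p q; rewrite !mxE. Qed.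

Lemma corner_adj m (A : 'M[C]_m.+1) : corner (adj A) = adj (corner A).
Proof. by apply/matrixP => p q; rewrite !mxE. Qed.

Lemma ratio_dist_le (N x y b c d K : R) :
  1 <= N -> 0 <= y <= (N + 1) * K -> 0 <= b <= 2 * K -> 0 <= d ->
  `|x - y| <= d * y + c ->
  `|x / N - (y + b) / (N + 1)| <= 2 * d * K + (c + 2 * K) / N.
Proof.
move=> N1 /andP[y0 yK] /andP[b0 bK] d0 hxy.
have N0 : 0 < N by lra.
have N10 : 0 < N + 1 by lra.
have -> : x / N - (y + b) / (N + 1) = ((x - y) + (y - b * N) / (N + 1)) / N.
  by field; rewrite !gt_eqF.
rewrite normrM normfV (gtr0_norm N0) ler_pdivrMr //.
have -> : (2 * d * K + (c + 2 * K) / N) * N = 2 * d * K * N + c + 2 * K.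
  by field; rewrite gt_eqF.
apply: le_trans (ler_normD _ _) _.
have dK : 0 <= d * K by rewrite mulr_ge0 //; lra.
have h1 : `|x - y| <= 2 * d * K * N + c.
  by apply: le_trans hxy _; have := ler_wpM2l d0 yK; nra.
have h2 : `|(y - b * N) / (N + 1)| <= 2 * K.
  rewrite normrM normfV (gtr0_norm N10) ler_pdivrMr //.
  by apply/ler_normlP; split; nra.
lra.
Qed.

Lemma sqrtr_dist_le (x y e : R) : 0 <= x -> 0 <= y -> 0 <= e ->
  `|x - y| <= e ^+ 2 -> `|Num.sqrt x - Num.sqrt y| <= e.
Proof.
move=> x0 y0 e0 hxy; rewrite -ler_sqr ?nnegrE //.
have sx := sqrtr_ge0 x; have sy := sqrtr_ge0 y.
apply: le_trans hxy.
rewrite -{2}(sqr_sqrtr x0) -{2}(sqr_sqrtr y0) subr_sqr normrM.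
rewrite (ger0_norm (addr_ge0 sx sy)) expr2 ler_wpM2l //.
by apply/ler_normlP; split; lra.
Qed.

Lemma hsnorm_corner_close m (W : 'M[C]_m.+1) (E : 'M[C]_m) (K d e : R) :
  (0 < m)%N -> 0 < d -> 0 <= e ->
  (forall q, colnorm2 W q <= K) -> (forall p, rownorm2 W p <= K) -> frob2 E <= 1 ->
  2 * d * K + (1 + d^-1 + 2 * K) / m%:R <= e ^+ 2 ->
  `|hsnorm (corner W - E) - hsnorm W| <= e.
Proof.
move=> m0 d0 e0 hcol hrow hE he.
rewrite !hsnormE; apply: sqrtr_dist_le; rewrite ?mulr_ge0 ?invr_ge0 ?frob2_ge0 //.
apply: le_trans he.
have /andP[cW Wc] := frob2_corner W.
have WK := frob2_le_cols hcol.
have := hcol ord_max; have := hrow ord_max.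
rewrite -(subrKC (frob2 (corner W)) (frob2 W)) -natr1 in WK *.
rewrite !(mulrC _^-1) => Kr Kc; apply: ratio_dist_le.
- by rewrite ler1n.
- by apply/andP; split; [apply: frob2_ge0 | lra].
- by apply/andP; split; lra.
- exact: ltW.
apply: le_trans (frob2_subr_young _ _ d0) _; rewrite lerD2l -[X in _ <= X]mulr1.
by rewrite ler_wpM2l // addr_ge0 // invr_ge0 ltW.
Qed.

Lemma corner_round_close m (b1 b2 b3 : 'M[C]_m.+1) (y z : C) (d e : R) :
  (0 < m)%N -> contraction b1 -> contraction b2 -> contraction b3 ->
  normc2 y <= 1 -> normc2 z <= 1 -> 0 < d -> 0 <= e ->
  18 * d + (19 + d^-1) / m%:R <= e ^+ 2 ->
  [/\ `| hsnorm (corner b1) - hsnorm b1 | <= e,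
      `| hsnorm (corner b1 * corner b2 - corner b3) - hsnorm (b1 * b2 - b3) | <= e,
      `| hsnorm (y *: corner b1 + z *: corner b2 - corner b3)
         - hsnorm (y *: b1 + z *: b2 - b3) | <= e
    & `| hsnorm (adj (corner b1) - corner b2) - hsnorm (adj b1 - b2) | <= e].
Proof.
move=> m0 h1 h2 h3 hy hz d0 e0 he.
have close A B D (E : 'M[C]_m) : contraction A -> contraction B -> contraction D ->
    frob2 E <= 1 -> `|hsnorm (corner (A + B + D) - E) - hsnorm (A + B + D)| <= e.
  move=> hA hB hD hE; have [hcol hrow] := lines_add3_le9 hA hB hD.
  apply: (hsnorm_corner_close (d := d)) hcol hrow hE _ => //.
  by rewrite (_ : 1 + d^-1 + 2 * 9 = 19 + d^-1); [lra | ring].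
have c0 : contraction (0 : 'M[C]_m.+1) by apply: contraction0.
have E0 : frob2 (0 : 'M[C]_m) <= 1 by rewrite frob2_0 ler01.
split.
- by have := close _ _ _ _ h1 c0 c0 E0; rewrite !addr0 subr0.
- have := close _ _ _ _ (contractionM h1 h2) (contractionN h3) c0 (frob2_corner_cross h1 h2).
  by rewrite addr0 cornerD cornerN mulmxE corner_mul addrAC addrK.
- have := close _ _ _ _ (contractionZ hy h1) (contractionZ hz h2) (contractionN h3) E0.
  by rewrite subr0 !cornerD cornerN !cornerZ.
- have := close _ _ _ _ (contraction_adj h1) (contractionN h2) c0 E0.
  by rewrite addr0 subr0 cornerD cornerN corner_adj.
Qed.

Definition corner_strategy m : dup_strategy R m m.+1 :=
  DupStrategy (fun _ X => pad X) (fun _ Y => corner Y).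

Lemma corner_strategy_legal m : legal_strategy (corner_strategy m).
Proof. by split=> h x hx /=; [apply: contraction_pad | apply: contraction_corner]. Qed.

Definition corner_pair m (ab : 'M[C]_m * 'M[C]_m.+1) : Prop :=
  ab.1 = corner ab.2 /\ contraction ab.2.

Lemma play_corner_pairs m (cs : seq ('M[C]_m + 'M[C]_m.+1)) :
  (forall c, c \in cs -> chal_move_legal c) ->
  forall i, corner_pair (nth (0, 0) (play (corner_strategy m) cs) i).
Proof.
have pair0 : corner_pair (0 : 'M[C]_m, 0 : 'M[C]_m.+1).
  by split; [apply/matrixP => p q; rewrite !mxE | apply: contraction0].
suff inv h : (forall c, c \in cs -> chal_move_legal c) ->
    (forall i, corner_pair (nth (0, 0) h i)) ->
    forall i, corner_pair (nth (0, 0) (foldl (inning (corner_strategy m)) h cs) i).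
  by move=> hcs; apply: inv => // i; rewrite nth_nil.
elim: cs h => [|c cs IH] h hcs hh //=.
apply: IH => [c' hc'|i]; first by apply: hcs; rewrite in_cons hc' orbT.
have {hcs} := hcs c (mem_head _ _).
case: c => x /= hx; rewrite nth_rcons; (case: ifP => _; first exact: hh); case: ifP => _ //.
by split; [rewrite corner_pad | apply: contraction_pad].
Qed.

Lemma exists_nat_div_le (c e : R) : 0 <= c -> 0 < e ->
  exists M, forall m, (M <= m)%N -> (0 < m)%N /\ c / m%:R <= e.
Proof.
move=> c0 e0; exists (Num.bound (c / e)).+1 => m hm.
have m0 : (0 < m)%N by apply: leq_trans hm.
split=> //; rewrite ler_pdivrMr ?ltr0n // mulrC -ler_pdivrMr //.
apply: le_trans (ltW (archi_boundP (divr_ge0 c0 (ltW e0)))) _.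
by rewrite ler_nat ltnW.
Qed.

End HSGameDuplicator.

Theorem lemma5 (R : realType) (n : nat) (eps : R) :
  (1 <= n)%N -> 0 < eps ->
  exists M : nat, forall m : nat, (M <= m)%N ->
    dup_has_winning_strategy m m.+1 n eps.
Proof.
move=> _ eps0.
pose d := eps ^+ 2 / 36.
have d0 : 0 < d by rewrite divr_gt0 ?exprn_gt0.
have c0 : 0 <= 19 + d^-1 by rewrite addr_ge0 ?invr_ge0 ?ltW.
have [M hM] := exists_nat_div_le c0 (divr_gt0 (exprn_gt0 2 eps0) (ltr0Sn _ 1)).
exists M => m /hM[m0 hm].
exists (corner_strategy R m); split; first exact: corner_strategy_legal.
move=> cs _ hcs /= i j k _ _ _ y z; rewrite ge_max => /andP[hy hz].
have [-> hi] := play_corner_pairs hcs i.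
have [-> hj] := play_corner_pairs hcs j.
have [-> hk] := play_corner_pairs hcs k.
apply: (corner_round_close (d := d)) => //; try exact: normc2_le1; first exact: ltW.
have -> : 18 * d = eps ^+ 2 / 2 by rewrite /d; field.
lra.
Qed.
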